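(* The mechanism \textsc{Greedy Min-Sum} is strategyproof: for every instance $(N,P,T,(\mathbf{D}_i)_{i\in N})$, every agent $i\in N$ and every disapproval vector $\mathbf{D}'_i$, we have $d_i(\mathcal{M}(\mathcal{D}_{-i},\mathbf{D}_i))\le d_i(\mathcal{M}(\mathcal{D}_{-i},\mathbf{D}'_i))$, where $\mathcal{M}$ is \textsc{Greedy Min-Sum} and $d_i$ is computed with respect to the true disapproval vector $\mathbf{D}_i$.
   Context: An instance is $(N,P,T,(\mathbf{D}_i)_{i\in N})$ with agents $N=[n]$, projects $P=\{p_1,\dots,p_m\}$, timesteps $T=[\ell]$, and disapproval vectors $\mathbf{D}_i=(D_{i1},\dots,D_{i\ell})$ with $D_{ik}\subseteq P$. An outcome is $\mathbf{o}=(o_1,\dots,o_\ell)\in P^\ell$ and $d_i(\mathbf{o})=|\{k\in T:o_k\in D_{ik}\}|$. A mechanism maps each instance to an outcome. $\mathcal{D}_{-i}$ denotes the list of disapproval vectors of all agents other than $i$. \textsc{Greedy Min-Sum} selects, at each timestep $k$, a project with the smallest number of agents disapproving it at timestep $k$ (i.e., minimizing $|\{j\in N:p\in D_{jk}\}|$), breaking ties lexicographically according to the fixed order $p_1,\dots,p_m$. *)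

From mathcomp Require Import all_boot.
Set Implicit Arguments. Unset Strict Implicit. Unset Printing Implicit Defensive.

(* Agents N = 'I_n, projects P = 'I_m (p_1,...,p_m ordered by index),
   timesteps T = 'I_l.  m is written m.+1 in the statement so that P is
   nonempty (outcomes exist). *)

Definition dvec (m l : nat) := {ffun 'I_l -> {set 'I_m}}.

Definition profile (n m l : nat) := {ffun 'I_n -> dvec m l}.

Definition outcome (m l : nat) := {ffun 'I_l -> 'I_m}.

Definition disutil (m l : nat) (D : dvec m l) (o : outcome m l) : nat :=
  #|[set k : 'I_l | o k \in D k]|.

Definition nb_disapp (n m l : nat) (prof : profile n m l) (k : 'I_l) (p : 'I_m) : nat :=
  #|[set j : 'I_n | p \in prof j k]|.

Definition min_score (n m l : nat) (prof : profile n m.+1 l) (k : 'I_l) : nat :=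
  \big[minn/n]_(p : 'I_m.+1) nb_disapp prof k p.

Definition greedy_choice (n m l : nat) (prof : profile n m.+1 l) (k : 'I_l) : 'I_m.+1 :=
  odflt ord0 [pick p : 'I_m.+1 | (nb_disapp prof k p == min_score prof k)
                                  && [forall q : 'I_m.+1, (q < p) ==> (nb_disapp prof k q != min_score prof k)]].

Definition greedy_min_sum (n m l : nat) (prof : profile n m.+1 l) : outcome m.+1 l :=
  [ffun k => greedy_choice prof k].

Definition replace (n m l : nat) (prof : profile n m l) (i : 'I_n) (D' : dvec m l) : profile n m l :=
  [ffun j => if j == i then D' else prof j].

(* Timesteps are independent.  At timestep k agent i adds at most one point, to the
   projects in its reported set, on top of the scores b of the other agents, which it
   cannot influence.  If the truthful choice x lies in D_ik, then b x + 1 <= b y for every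
   y outside D_ik; a deviation choosing such a y needs b y <= b x + 1, so both
   minimality inequalities are ties, and lexicographic tie-breaking then forces x <= y
   and y <= x.  Hence every timestep where i disapproves the truthful outcome is still
   disapproved after any deviation. *)

From mathcomp Require Import all_boot.
From mathcomp Require Import zify.

Set Implicit Arguments.
Unset Strict Implicit.
Unset Printing Implicit Defensive.

Definition first_argmin (m : nat) (f : 'I_m -> nat) (x : 'I_m) : Prop :=
  forall q, f x <= f q /\ (f q <= f x -> x <= q).

Lemma eq_first_argmin (m : nat) (f g : 'I_m -> nat) (x : 'I_m) :
  f =1 g -> first_argmin f x -> first_argmin g x.
Proof. by move=> eq_fg x_min q; rewrite -!eq_fg; apply: x_min. Qed.

Lemma first_argmin_penalty_mem (m : nat) (base : 'I_m -> nat) (A B : pred 'I_m) (x y : 'I_m) :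
  first_argmin (fun q => base q + A q) x -> first_argmin (fun q => base q + B q) y ->
  A x -> A y.
Proof.
move=> x_min y_min Ax; apply: contraT => nAy.
have [Ax_le_Ay x_first] := x_min y; have [By_le_Bx y_first] := y_min x.
rewrite Ax (negbTE nAy) /= in Ax_le_Ay x_first.
have x_eq_y : x = y.
  apply/val_inj/eqP; rewrite eqn_leq x_first ?y_first //;
  by move: Ax_le_Ay By_le_Bx; case: (B x); case: (B y) => /=; lia.
by rewrite -x_eq_y Ax in nAy.
Qed.

Lemma geq_bigminn_seq (I : eqType) (a : nat) (r : seq I) (F : I -> nat) (x : I) :
  x \in r -> \big[minn/a]_(i <- r) F i <= F x.
Proof.
elim: r => [|y r IHr] //; rewrite inE big_cons => /orP [/eqP <-|x_r].
  exact: geq_minl.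
exact: leq_trans (geq_minr _ _) (IHr x_r).
Qed.

Section GreedyChoice.
Variables (n m l : nat) (prof : profile n m.+1 l) (k : 'I_l).

Lemma min_score_le (p : 'I_m.+1) : min_score prof k <= nb_disapp prof k p.
Proof. exact: geq_bigminn_seq (mem_index_enum p). Qed.

Lemma min_score_attained : exists p, nb_disapp prof k p = min_score prof k.
Proof.
have [p _ p_min] := @arg_minnP _ ord0 predT (nb_disapp prof k) erefl.
exists p; apply/eqP; rewrite eqn_leq min_score_le andbT.
apply: (big_ind (fun s => nb_disapp prof k p <= s)) => [|s t|q _].
- by apply: leq_trans (max_card _) _; rewrite card_ord.
- by rewrite leq_min => -> ->.
- exact: p_min.
Qed.

Lemma greedy_choiceP : first_argmin (nb_disapp prof k) (greedy_choice prof k).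
Proof.
rewrite /greedy_choice; case: pickP => [p /andP [/eqP p_min /forallP p_first]|no_choice] /=.
  move=> q; rewrite p_min min_score_le; split=> // q_le_p.
  rewrite leqNgt; apply/negP => /(implyP (p_first q)).
  by rewrite eqn_leq q_le_p min_score_le.
have [p0 p0_min] := min_score_attained.
have [p p_min p_first] := @arg_minnP _ p0
  (fun p => nb_disapp prof k p == min_score prof k) val (introT eqP p0_min).
case/negP: (negbT (no_choice p)); rewrite p_min /=.
apply/forallP => q; apply/implyP => q_lt_p; apply/negP => q_min.
by have := p_first q q_min; rewrite leqNgt q_lt_p.
Qed.

End GreedyChoice.

Definition nb_disapp_others (n m l : nat) (prof : profile n m l) (i : 'I_n)
    (k : 'I_l) (p : 'I_m) : nat :=
  #|[set j | (j != i) && (p \in prof j k)]|.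

Lemma nb_disappE (n m l : nat) (prof : profile n m l) (i : 'I_n) (k : 'I_l) (p : 'I_m) :
  nb_disapp prof k p = nb_disapp_others prof i k p + (p \in prof i k).
Proof.
rewrite /nb_disapp (cardD1 i) inE addnC; congr (_ + _).
by apply: eq_card => j; rewrite !inE andbC.
Qed.

Lemma eq_nb_disapp_others (n m l : nat) (prof prof' : profile n m l) (i : 'I_n) :
  (forall j, j != i -> prof' j = prof j) ->
  nb_disapp_others prof' i =2 nb_disapp_others prof i.
Proof.
move=> agree k p; apply: eq_card => j; rewrite !inE.
by case: eqP => //= /eqP j_neq_i; rewrite agree.
Qed.

Lemma greedy_choice_deviation_mem (n m l : nat) (prof prof' : profile n m.+1 l)
    (i : 'I_n) (k : 'I_l) :
  (forall j, j != i -> prof' j = prof j) ->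
  greedy_choice prof k \in prof i k -> greedy_choice prof' k \in prof i k.
Proof.
move=> agree.
apply: (@first_argmin_penalty_mem _ (nb_disapp_others prof i k) _ (mem (prof' i k))).
  by apply: eq_first_argmin (greedy_choiceP prof k) => p; rewrite (nb_disappE _ i).
apply: eq_first_argmin (greedy_choiceP prof' k) => p.
by rewrite (nb_disappE _ i) (eq_nb_disapp_others agree).
Qed.

Lemma replace_other (n m l : nat) (prof : profile n m l) (i : 'I_n) (D' : dvec m l) (j : 'I_n) :
  j != i -> replace prof i D' j = prof j.
Proof. by rewrite ffunE => /negbTE ->. Qed.

Theorem theorem9 (n m l : nat) (prof : profile n m.+1 l) (i : 'I_n) (D' : dvec m.+1 l) :
  disutil (prof i) (greedy_min_sum prof) <=
  disutil (prof i) (greedy_min_sum (replace prof i D')).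
Proof.
apply/subset_leq_card/subsetP => k; rewrite !inE !ffunE.
exact/greedy_choice_deviation_mem/replace_other.
Qed.
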